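(* Let $S$ be a compact, metrizable, separable space, let $A$ be the generator of a Feller semigroup on $C(S)$, and let $R_\lambda=(\lambda-A)^{-1}$, $\lambda>0$, be its resolvent. Suppose $(0,\infty)\ni\lambda\mapsto \ell_\lambda\in C(S)$ is locally bounded and satisfies $$(\lambda-\mu)R_\lambda \ell_\mu=\ell_\mu-\ell_\lambda,\qquad \lambda,\mu>0.$$ Then $\lambda\mapsto\ell_\lambda$ is infinitely differentiable (as a $C(S)$-valued map) and $$\ell_\lambda^{(n)}=(-1)^n n!\,(R_\lambda)^n\ell_\lambda,\qquad n\ge 1,\ \lambda>0.$$
   Context: $C(S)$ is the Banach space of real continuous functions on $S$ with the supremum norm. A Feller semigroup is a strongly continuous semigroup of positive contraction operators on $C(S)$ with $T(0)=I$; it need not be conservative (i.e. $T(t)1_S=1_S$ is not required). Its generator is $Af=\lim_{t\to0}t^{-1}(T(t)f-f)$ on the set of $f$ for which the limit exists in norm; the resolvent satisfies $\|\lambda R_\lambda\|\le 1$. *)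

(* C(S) is modelled as the continuous functions
   S -> R; norm statements are written out as uniform bounds (sup norm). *)
From HB Require Import structures.
From mathcomp Require Import all_boot all_order all_algebra.
From mathcomp Require Import all_classical all_reals all_analysis.
Set Implicit Arguments. Unset Strict Implicit. Unset Printing Implicit Defensive.
Import Order.TTheory GRing.Theory Num.Theory.
Import numFieldNormedType.Exports.
Local Open Scope classical_set_scope.
Local Open Scope ring_scope.

Section Feller.
Context {R : realType} {S : metricType R}.

(* (possibly nonlinear a priori) maps on real functions on S; only their
   behaviour on C(S) matters *)
Definition op := (S -> R) -> (S -> R).

(* Feller semigroup: strongly continuous semigroup of positive linear
   contractions on C(S) with T(0) = I (not necessarily conservative). *)
Definition feller_semigroup (T : R -> op) : Prop :=
  (forall t (f : S -> R), 0 <= t -> continuous f -> continuous (T t f)) /\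
      (forall t a (f g : S -> R), 0 <= t -> continuous f -> continuous g ->
         T t (fun x => a * f x + g x) = (fun x => a * T t f x + T t g x)) /\
      (forall t (f : S -> R), 0 <= t -> continuous f -> (forall x, 0 <= f x) ->
         forall x, 0 <= T t f x) /\
      (forall t (f : S -> R) c, 0 <= t -> continuous f -> (forall x, `|f x| <= c) ->
         forall x, `|T t f x| <= c) /\
      (forall f : S -> R, continuous f -> T 0 f = f) /\
      (forall s t (f : S -> R), 0 <= s -> 0 <= t -> continuous f ->
         T (s + t) f = T s (T t f)) /\
      (forall f : S -> R, continuous f -> forall t0, 0 <= t0 -> forall e, 0 < e ->
         exists2 d, 0 < d & forall t, 0 <= t -> `|t - t0| < d ->
           forall x, `|T t f x - T t0 f x| <= e).

(* graph of the generator: f \in D(A) and A f = g, i.e.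
   g = lim_{t -> 0+} (T t f - f)/t in sup norm *)
Definition gen_graph (T : R -> op) (f g : S -> R) : Prop :=
  [/\ continuous f, continuous g &
      forall e, 0 < e -> exists2 d, 0 < d & forall t, 0 < t -> t < d ->
        forall x, `|(T t f x - f x) / t - g x| <= e].

(* Rs l = (l - A)^{-1} for every l > 0 *)
Definition is_resolvent (T : R -> op) (Rs : R -> op) : Prop :=
  forall l, 0 < l ->
    (forall f : S -> R, continuous f ->
       gen_graph T (Rs l f) (fun x => l * Rs l f x - f x)) /\
    (forall g h, gen_graph T g h -> Rs l (fun x => l * g x - h x) = g).

Definition has_uderiv (F : R -> S -> R) (l : R) (G : S -> R) : Prop :=
  forall e, 0 < e -> exists2 d, 0 < d & forall h, h != 0 -> `|h| < d ->
    forall x, `|(F (l + h) x - F l x) / h - G x| <= e.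

Definition locally_bounded (L : R -> S -> R) : Prop :=
  forall l, 0 < l -> exists2 d, 0 < d & exists M, forall m, 0 < m ->
    `|m - l| < d -> forall x, `|L m x| <= M.

End Feller.

From HB Require Import structures.
From mathcomp Require Import all_boot all_order all_algebra.
From mathcomp Require Import all_classical all_reals all_analysis.
From mathcomp Require Import ring lra.
Import Order.TTheory GRing.Theory Num.Theory.
Import numFieldNormedType.Exports.
Local Open Scope classical_set_scope.
Local Open Scope ring_scope.
Set Implicit Arguments. Unset Strict Implicit. Unset Printing Implicit Defensive.

(* Write [P k m] for [R_m^k l_m]. The resolvent equation with the roles of
   [m] and [m + h] exchanged reads [l_(m+h) - l_m = - h R_(m+h) l_m], and the
   resolvent identity [R_(m+h) - R_m = - h R_(m+h) R_m] turns the difference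
   quotient of [P (k+1)] into [R_(m+h)] applied to (difference quotient of
   [P k]) minus [P (k+1) m].  The generator is dissipative, so
   [|R_m f| <= |f| / m]; together with the resolvent identity this makes
   [R_(m+h) f_h] converge uniformly to [R_m f] whenever [f_h] converges
   uniformly to [f].  Induction on [k] then shows that the difference quotients
   of [P k] converge uniformly to [- (k+1) P (k+1) m]. *)

Lemma addr_gt0_half (R : realFieldType) (l h : R) : `|h| < l / 2 -> 0 < l + h.
Proof. by rewrite ltr_norml => /andP[]; lra. Qed.

Section UniformLimitAtZero.
Variables (R : realType) (S : Type) (P : R -> Prop).

Definition ucvg_at0 (F : R -> S -> R) (G : S -> R) : Prop :=
  forall e, 0 < e -> exists2 d, 0 < d & forall t, P t -> `|t| < d ->
    forall x, `|F t x - G x| <= e.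

Lemma ucvg_at0_eq (r : R) (F F' : R -> S -> R) (G G' : S -> R) : 0 < r ->
  (forall t x, P t -> `|t| < r -> F t x = F' t x) -> (forall x, G x = G' x) ->
  ucvg_at0 F G -> ucvg_at0 F' G'.
Proof.
move=> hr eF eG FG e /FG[d hd D]; exists (Num.min d r); first by rewrite lt_min hd.
by move=> t Pt; rewrite lt_min => /andP[td tr] x; rewrite -eF // -eG; apply: D.
Qed.

Lemma ucvg_at0_cst (G : S -> R) : ucvg_at0 (fun _ => G) G.
Proof. by move=> e he; exists 1 => // t _ _ x; rewrite subrr normr0 ltW. Qed.

Lemma ucvg_at0_lin (a : R) (F1 F2 : R -> S -> R) (G1 G2 : S -> R) :
  ucvg_at0 F1 G1 -> ucvg_at0 F2 G2 ->
  ucvg_at0 (fun t x => a * F1 t x + F2 t x) (fun x => a * G1 x + G2 x).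
Proof.
move=> FG1 FG2 e he; set K := `|a| + 1.
have hK : 0 < K by rewrite ltr_pwDr.
have [d1 hd1 D1] := FG1 (e / 2 / K) (divr_gt0 (divr_gt0 he (ltr0Sn _ 1)) hK).
have [d2 hd2 D2] := FG2 (e / 2) (divr_gt0 he (ltr0Sn _ 1)).
exists (Num.min d1 d2) => [|t Pt]; first by rewrite lt_min hd1.
rewrite lt_min => /andP[td1 td2] x.
have -> : a * F1 t x + F2 t x - (a * G1 x + G2 x)
    = a * (F1 t x - G1 x) + (F2 t x - G2 x) by ring.
have aK : `|a| * (e / 2 / K) <= e / 2.
  by rewrite mulrA ler_pdivrMr // mulrC ler_wpM2l ?divr_ge0 ?(ltW he) // /K lerDl.
apply: le_trans (ler_normD _ _) _; rewrite normrM.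
have := ler_wpM2l (normr_ge0 a) (D1 t Pt td1 x); have := D2 t Pt td2 x; lra.
Qed.

Lemma ucvg_at0_Z (a : R) (F : R -> S -> R) (G : S -> R) :
  ucvg_at0 F G -> ucvg_at0 (fun t x => a * F t x) (fun x => a * G x).
Proof.
move=> FG; apply: ucvg_at0_eq ltr01 _ _ (ucvg_at0_lin a FG (ucvg_at0_cst (fun _ => 0))).
  by move=> *; rewrite addr0.
by move=> x; rewrite addr0.
Qed.

Lemma ucvg_at0_lipschitz (r C : R) (F : R -> S -> R) (G : S -> R) : 0 < r ->
  (forall t x, P t -> `|t| < r -> `|F t x - G x| <= C * `|t|) -> ucvg_at0 F G.
Proof.
move=> hr FG e he; have hK : 0 < `|C| + 1 by rewrite ltr_pwDr.
exists (Num.min r (e / (`|C| + 1))); first by rewrite lt_min hr divr_gt0.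
move=> t Pt; rewrite lt_min => /andP[tr]; rewrite ltr_pdivlMr // => te x.
have := FG t x Pt tr; have := ler_wpM2r (normr_ge0 t) (ler_norm C).
have := normr_ge0 t; lra.
Qed.

End UniformLimitAtZero.

Section ContinuousFunctions.
Variables (R : realType) (S : metricType R).
Hypothesis compactS : compact [set: S].

Lemma continuous_lin (a : R) (f g : S -> R) :
  continuous f -> continuous g -> continuous (fun x => a * f x + g x).
Proof. by move=> cf cg x; apply: cvgD; [apply: cvgMr; apply: cf | apply: cg]. Qed.

Lemma continuous_bounded (f : S -> R) :
  continuous f -> exists M, forall x, `|f x| <= M.
Proof.
move=> cf.
have /compact_bounded[M [_ HM]] := continuous_compact (continuous_subspaceT cf) compactS.
by exists (M + 1) => x; apply: (HM (M + 1)); [rewrite ltrDl | exists x].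
Qed.

Lemma continuous_abs_max (f : S -> R) : continuous f -> S ->
  exists x0, forall x, `|f x| <= `|f x0|.
Proof.
move=> cf x.
have [|x0 _ max_x0] :=
  @compact_EVT_max _ _ (fun x => `|f x|) _ (ex_intro _ x I) compactS.
  apply: continuous_subspaceT => y.
  by apply: continuous_comp; [apply: cf | apply: norm_continuous].
by exists x0 => y; apply: max_x0; rewrite in_setT.
Qed.

End ContinuousFunctions.

Section Resolvent.
Variables (R : realType) (S : metricType R) (T Rs : R -> @op R S).
Hypotheses (compactS : compact [set: S]) (fellerT : feller_semigroup T)
  (resolventRs : is_resolvent T Rs).

Lemma gen_graphE (f g : S -> R) : gen_graph T f g <->
  [/\ continuous f, continuous g &
      ucvg_at0 (fun t => 0 < t) (fun t x => (T t f x - f x) / t) g].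
Proof.
split=> -[cf cg H]; split=> // e /H[d hd D]; exists d => // t t0.
  by rewrite gtr0_norm //; apply: D.
by move=> td; apply: D; rewrite ?gtr0_norm.
Qed.

Lemma gen_graph_lin (a : R) (g1 g2 u1 u2 : S -> R) :
  gen_graph T g1 u1 -> gen_graph T g2 u2 ->
  gen_graph T (fun x => a * g1 x + g2 x) (fun x => a * u1 x + u2 x).
Proof.
move=> /gen_graphE[cg1 cu1 H1] /gen_graphE[cg2 cu2 H2].
have [_ [linT _]] := fellerT.
apply/gen_graphE; split; try exact: continuous_lin.
apply: ucvg_at0_eq ltr01 _ _ (ucvg_at0_lin a H1 H2) => // t x t0 _.
by rewrite (linT _ _ _ _ (ltW t0) cg1 cg2); field; rewrite gt_eqF.
Qed.

Lemma gen_graph_dissipative (g u : S -> R) (m : R) (x0 : S) :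
  gen_graph T g u -> 0 <= m -> (forall x, `|g x| <= `|g x0|) ->
  m * `|g x0| <= `|m * g x0 - u x0|.
Proof.
move=> [cg _ H] hm max_x0; apply/ler_addgt0Pr => eps heps.
have [d hd D] := H eps heps; set t := d / 2.
have ht : 0 < t by rewrite divr_gt0.
have [_ [_ [_ [contrT _]]]] := fellerT.
have Tg := contrT t g _ (ltW ht) cg max_x0 x0.
have err : `|(T t g x0 - g x0) / t - u x0| <= eps.
  by apply: D => //; rewrite /t ltr_pdivrMr // ltr_pMr // ltr1n.
set a := T t g x0 in Tg err.
set b := g x0 in Tg err *.
set w := u x0 in err *.
have tm : 0 < 1 + t * m by have := mulr_ge0 (ltW ht) hm; lra.
have key : (1 + t * m) * `|b| <= `|b| + t * eps + t * `|m * b - w|.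
  have -> : (1 + t * m) * `|b| = `|a - t * ((a - b) / t - w) + t * (m * b - w)|.
    by rewrite -(gtr0_norm tm) -normrM; congr `|_|; field; rewrite gt_eqF.
  apply: le_trans (ler_normD _ _) _; apply: lerD; last by rewrite normrM gtr0_norm.
  apply: le_trans (ler_normB _ _) _; apply: lerD => //.
  by rewrite normrM gtr0_norm // ler_wpM2l ?(ltW ht).
by rewrite -(ler_pM2l ht); lra.
Qed.

Lemma resolvent_continuous (m : R) (f : S -> R) :
  0 < m -> continuous f -> continuous (Rs m f).
Proof. by move=> hm cf; case: ((resolventRs hm).1 f cf). Qed.

Lemma resolvent_lin (m a : R) (f g : S -> R) : 0 < m -> continuous f -> continuous g ->
  Rs m (fun x => a * f x + g x) = (fun x => a * Rs m f x + Rs m g x).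
Proof.
move=> hm cf cg; have [graphRs RsK] := resolventRs hm.
rewrite -[RHS](RsK _ _ (gen_graph_lin a (graphRs f cf) (graphRs g cg))).
by congr (Rs m); apply: funext => x; ring.
Qed.

Lemma resolvent0 (m : R) : 0 < m -> Rs m (fun _ => 0) = (fun _ => 0).
Proof.
have c0 : continuous (fun _ : S => 0 : R) by move=> x; apply: cvg_cst.
move=> hm; have := resolvent_lin 1 hm c0 c0.
rewrite (_ : (fun _ => 1 * 0 + 0) = (fun _ => 0)); last by apply: funext => x; ring.
by move=> E; apply: funext => x; have := congr1 (@^~ x) E; rewrite /= mul1r; lra.
Qed.

Lemma resolventZ (m a : R) (f : S -> R) : 0 < m -> continuous f ->
  Rs m (fun x => a * f x) = (fun x => a * Rs m f x).
Proof.
move=> hm cf; have c0 : continuous (fun _ : S => 0 : R) by move=> x; apply: cvg_cst.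
have := resolvent_lin a hm cf c0; rewrite resolvent0 //.
by under eq_fun do rewrite addr0; under [RHS]eq_fun do rewrite addr0.
Qed.

Lemma resolventB (m : R) (f g : S -> R) : 0 < m -> continuous f -> continuous g ->
  Rs m (fun x => f x - g x) = (fun x => Rs m f x - Rs m g x).
Proof.
move=> hm cf cg; have := resolvent_lin (-1) hm cg cf.
rewrite (_ : (fun x => -1 * g x + f x) = (fun x => f x - g x)).
  by move=> ->; apply: funext => x; ring.
by apply: funext => x; ring.
Qed.

Lemma resolvent_identity (l m : R) (f : S -> R) : 0 < l -> 0 < m -> continuous f ->
  forall x, Rs m f x - Rs l f x = (l - m) * Rs m (Rs l f) x.
Proof.
move=> hl hm cf x; have [graphRl _] := resolventRs hl; have [_ RmK] := resolventRs hm.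
have := RmK _ _ (graphRl f cf).
rewrite (_ : (fun x => m * Rs l f x - (l * Rs l f x - f x))
           = (fun x => (m - l) * Rs l f x + f x)).
  rewrite (resolvent_lin _ hm (resolvent_continuous hl cf) cf) => E.
  by have /= <- := congr1 (@^~ x) E; ring.
by apply: funext => y; ring.
Qed.

Lemma resolvent_diff_quotient (l h : R) (f g : S -> R) : 0 < l -> 0 < l + h -> h != 0 ->
  continuous f -> continuous g -> forall x,
  Rs (l + h) (fun y => (f y - g y) / h - Rs l g y) x = (Rs (l + h) f x - Rs l g x) / h.
Proof.
move=> hl hlh h0 cf cg x.
have cfg : continuous (fun y => f y - g y) by move=> y; apply: cvgB; [apply: cf | apply: cg].
rewrite (_ : (fun y => _ / h - _) = (fun y => h^-1 * (f y - g y) - Rs l g y)); last first.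
  by apply: funext => y; rewrite mulrC.
have cq : continuous (fun y => h^-1 * (f y - g y)) by move=> y; apply: cvgMr; apply: cfg.
rewrite (resolventB hlh cq (resolvent_continuous hl cg)) (resolventZ _ hlh cfg).
rewrite (resolventB hlh cf cg).
have := resolvent_identity hl hlh cg x; rewrite (_ : l - (l + h) = - h); last by ring.
by move=> E; rewrite -(subrK (Rs l g x) (Rs (l + h) g x)) E; field.
Qed.

Lemma resolvent_contraction (m c : R) (f : S -> R) : 0 < m -> continuous f ->
  (forall x, `|f x| <= c) -> forall x, `|Rs m f x| <= c / m.
Proof.
move=> hm cf fc x; have [graphRs _] := resolventRs hm.
have [x0 max_x0] := continuous_abs_max compactS (resolvent_continuous hm cf) x.
have := gen_graph_dissipative (graphRs f cf) (ltW hm) max_x0.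
rewrite (_ : m * Rs m f x0 - _ = f x0); last by ring.
move=> /le_trans /(_ (fc x0)) bound_x0; rewrite ler_pdivlMr // mulrC.
exact: le_trans (ler_wpM2l (ltW hm) (max_x0 x)) bound_x0.
Qed.

Lemma resolvent_bound_near (l h c : R) (f : S -> R) : 0 < l -> `|h| < l / 2 ->
  continuous f -> (forall x, `|f x| <= c) -> forall x, `|Rs (l + h) f x| <= 2 * c / l.
Proof.
move=> hl hh cf fc x; have hlh := addr_gt0_half hh.
apply: le_trans (resolvent_contraction hlh cf fc x) _.
have c0 : 0 <= c by apply: le_trans (fc x).
rewrite ler_pdivrMr // mulrAC ler_pdivlMr //.
have : 0 <= c * (l + 2 * h).
  by rewrite mulr_ge0 //; move: hh; rewrite ltr_norml => /andP[]; lra.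
lra.
Qed.

Lemma ucvg_resolvent_cst (P : R -> Prop) (l : R) (f : S -> R) : 0 < l -> continuous f ->
  ucvg_at0 P (fun h => Rs (l + h) f) (Rs l f).
Proof.
move=> hl cf; have cRf := resolvent_continuous hl cf.
have [M HM] := continuous_bounded compactS cRf.
apply: (@ucvg_at0_lipschitz _ _ _ (l / 2) (2 * M / l)) => [|h x _ hh].
  by rewrite divr_gt0.
rewrite (resolvent_identity hl (addr_gt0_half hh) cf) (_ : l - (l + h) = - h); last by ring.
rewrite normrM normrN mulrC ler_wpM2r //.
exact: resolvent_bound_near hl hh cRf HM x.
Qed.

Lemma ucvg_resolvent_null (P : R -> Prop) (l : R) (F : R -> S -> R) : 0 < l ->
  (forall h, P h -> `|h| < l / 2 -> continuous (F h)) -> ucvg_at0 P F (fun _ => 0) ->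
  ucvg_at0 P (fun h => Rs (l + h) (F h)) (fun _ => 0).
Proof.
move=> hl cF F0 e he; have el2 : 0 < e * l / 2 by rewrite divr_gt0 ?mulr_gt0.
have [d hd D] := F0 _ el2.
exists (Num.min d (l / 2)) => [|h Ph]; first by rewrite lt_min hd divr_gt0.
rewrite lt_min => /andP[hd' hh] x; rewrite subr0.
have Fb y : `|F h y| <= e * l / 2 by have := D h Ph hd' y; rewrite subr0.
apply: le_trans (resolvent_bound_near hl hh (cF h Ph hh) Fb x) _.
by rewrite (_ : 2 * (e * l / 2) / l = e) //; field; rewrite gt_eqF.
Qed.

Lemma ucvg_resolvent (P : R -> Prop) (l : R) (F : R -> S -> R) (G : S -> R) : 0 < l ->
  (forall h, P h -> `|h| < l / 2 -> continuous (F h)) -> continuous G ->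
  ucvg_at0 P F G -> ucvg_at0 P (fun h => Rs (l + h) (F h)) (Rs l G).
Proof.
move=> hl cF cG FG.
have cFG h : P h -> `|h| < l / 2 -> continuous (fun x => F h x - G x).
  by move=> Ph hh x; apply: cvgB; [apply: cF | apply: cG].
have FG0 : ucvg_at0 P (fun h x => F h x - G x) (fun _ => 0).
  by move=> e /FG[d hd D]; exists d => // h Ph hd' x; rewrite subr0; apply: D.
have := ucvg_at0_lin 1 (ucvg_resolvent_null hl cFG FG0) (ucvg_resolvent_cst P hl cG).
apply: ucvg_at0_eq (divr_gt0 hl (ltr0Sn _ 1)) _ _ => [h x Ph hh|x]; last by ring.
by rewrite (resolventB (addr_gt0_half hh) (cF h Ph hh) cG); ring.
Qed.

End Resolvent.

Section IteratedResolventDerivative.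
Variables (R : realType) (S : metricType R) (T Rs : R -> @op R S) (L : R -> S -> R).
Hypotheses (compactS : compact [set: S]) (fellerT : feller_semigroup T)
  (resolventRs : is_resolvent T Rs) (contL : forall m, 0 < m -> continuous (L m))
  (resolvent_eqn : forall l m, 0 < l -> 0 < m ->
     (fun x => (l - m) * Rs l (L m) x) = (fun x => L m x - L l x)).

Lemma continuous_iter_resolvent (k : nat) (m : R) : 0 < m ->
  continuous (iter k (Rs m) (L m)).
Proof.
move=> hm; elim: k => [|k IH] /=; first exact: contL hm.
exact: (resolvent_continuous resolventRs hm IH).
Qed.

Lemma ucvg_L_quotient (l : R) : 0 < l ->
  ucvg_at0 (fun h => h != 0) (fun h x => (L (l + h) x - L l x) / h)
    (fun x => - Rs l (L l) x).
Proof.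
move=> hl; have := ucvg_at0_Z (-1) (ucvg_resolvent_cst compactS fellerT resolventRs
                                     (fun h => h != 0) hl (contL hl)).
apply: ucvg_at0_eq (divr_gt0 hl (ltr0Sn _ 1)) _ _ => [h x h0 hh|x]; last by ring.
have := congr1 (@^~ x) (resolvent_eqn (addr_gt0_half hh) hl) => /=.
rewrite (_ : l + h - l = h) => [E|]; last by ring.
by rewrite (_ : L (l + h) x = L l x - h * Rs (l + h) (L l) x); [field | rewrite E; ring].
Qed.

Lemma ucvg_iter_resolvent_quotient (l : R) (k : nat) : 0 < l ->
  ucvg_at0 (fun h => h != 0)
    (fun h x => (iter k (Rs (l + h)) (L (l + h)) x - iter k (Rs l) (L l) x) / h)
    (fun x => - k.+1%:R * iter k.+1 (Rs l) (L l) x).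
Proof.
move=> hl; elim: k => [|k IH].
  by apply: ucvg_at0_eq ltr01 _ _ (ucvg_L_quotient hl) => // x /=; ring.
have cP0 := continuous_iter_resolvent (k := k) hl.
have cP1 := resolvent_continuous resolventRs hl cP0.
set P0 := iter k (Rs l) (L l) in IH cP0 cP1 *; set P1 := Rs l P0 in cP1 *.
change (iter k.+1 (Rs l) (L l)) with P1 in IH.
have cPk h : `|h| < l / 2 -> continuous (iter k (Rs (l + h)) (L (l + h))).
  by move=> hh; apply: continuous_iter_resolvent (addr_gt0_half hh).
have cF h : h != 0 -> `|h| < l / 2 -> continuous
    (fun x => (iter k (Rs (l + h)) (L (l + h)) x - P0 x) / h - P1 x).
  move=> _ hh x; apply: cvgB; last exact: cP1.
  by apply: cvgMl; apply: cvgB; [apply: cPk | apply: cP0].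
have cG : continuous (fun x => - k.+2%:R * P1 x) by move=> x; apply: cvgMr; apply: cP1.
have QP1 : ucvg_at0 (fun h => h != 0)
    (fun h x => (iter k (Rs (l + h)) (L (l + h)) x - P0 x) / h - P1 x)
    (fun x => - k.+2%:R * P1 x).
  by apply: ucvg_at0_eq ltr01 _ _ (ucvg_at0_lin 1 IH (ucvg_at0_cst _ (fun x => - P1 x)))
    => [*|x]; ring.
have := ucvg_resolvent compactS fellerT resolventRs hl cF cG QP1.
apply: ucvg_at0_eq (divr_gt0 hl (ltr0Sn _ 1)) _ _ => [h x h0 hh|x].
  have hlh := addr_gt0_half hh.
  by rewrite (resolvent_diff_quotient fellerT resolventRs hl hlh h0 (cPk h hh) cP0).
by rewrite (resolventZ fellerT resolventRs _ hl cP1).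
Qed.

End IteratedResolventDerivative.

Lemma has_uderiv_ucvg_at0 (R : realType) (S : metricType R) (F : R -> S -> R)
    (l : R) (G : S -> R) :
  ucvg_at0 (fun h => h != 0) (fun h x => (F (l + h) x - F l x) / h) G ->
  has_uderiv F l G.
Proof. exact. Qed.

Theorem proposition1 (R : realType) (S : metricType R)
  (T : R -> op) (Rs : R -> op) (L : R -> S -> R) :
  compact [set: S] ->
  (exists D : set S, countable D /\ dense D) ->
  feller_semigroup T ->
  is_resolvent T Rs ->
  (forall m, 0 < m -> continuous (L m)) ->
  locally_bounded L ->
  (forall l m, 0 < l -> 0 < m ->
     (fun x => (l - m) * Rs l (L m) x) = (fun x => L m x - L l x)) ->
  forall (n : nat) (l : R), 0 < l ->
    has_uderiv
      (fun m x => (-1) ^+ n * n`!%:R * iter n (Rs m) (L m) x) l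
      (fun x => (-1) ^+ n.+1 * n.+1`!%:R * iter n.+1 (Rs l) (L l) x).
Proof.
move=> compactS _ fellerT resolventRs contL _ resolvent_eqn n l hl.
apply: has_uderiv_ucvg_at0.
have := ucvg_at0_Z ((-1) ^+ n * n`!%:R)
  (ucvg_iter_resolvent_quotient compactS fellerT resolventRs contL resolvent_eqn n hl).
apply: ucvg_at0_eq ltr01 _ _ => [h x h0 _|x]; first by field.
by rewrite exprS factS natrM; ring.
Qed.
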